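(* Let $p\ge 2$, let $F$ be a distribution on $\mathbb{R}^p$, let $X\sim F$, let $X_1,X_2,\ldots$ be independent random vectors with distribution $F$, let $t\in\mathbb{R}^p$, and let $(t_n)_{n\in\mathbb{N}}$ be a sequence of random $p$-vectors (defined on the same probability space as the $X_i$). Suppose that $E|t_n-t|^4=O(n^{-2})$ as $n\to\infty$ and $E|X-t|^{-3/2}<\infty$. Let $n^*=\#\{1\le i\le n : X_i\neq t_n\}$. Then $(n-n^* )/\sqrt{n}\to 0$ in probability as $n\to\infty$.
   Context: $|\cdot|$ denotes the Euclidean norm on $\mathbb{R}^p$. *)

(* R^p is modelled as p.-tuple R, whose canonical
   measurable structure (measurable_structure.v) is the sigma-algebra generated
   by the coordinate projections, i.e. the Borel sigma-algebra of R^p. *)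
From HB Require Import structures.
From mathcomp Require Import all_boot all_order all_algebra.
From mathcomp Require Import all_classical all_reals all_analysis.
Set Implicit Arguments. Unset Strict Implicit. Unset Printing Implicit Defensive.
Import Order.TTheory GRing.Theory Num.Def Num.Theory.
Import numFieldNormedType.Exports.
Local Open Scope classical_set_scope.
Local Open Scope ring_scope.

Definition eucl_dist (R : realType) (p : nat) (x y : p.-tuple R) : R :=
  Num.sqrt (\sum_(i < p) (tnth x i - tnth y i) ^+ 2).

Definition inv_pow32 (R : realType) (r : R) : \bar R :=
  if r == 0 then +oo%E else (r `^ (- (3 / 2)))%:E.

Definition mutually_independent d d' (T : measurableType d)
  (T' : measurableType d') (R : realType) (P : probability T R)
  (X : nat -> T -> T') : Prop :=
  forall (s : seq nat) (B : nat -> set T'),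
    uniq s -> (forall i, i \in s -> measurable (B i)) ->
    P (\bigcap_(i in [set` s]) (X i @^-1` B i)) =
    (\prod_(i <- s) P (X i @^-1` B i))%E.

(* number of indices 0 <= i < n with X i w <> tn w  (X i stands for X_(i+1)) *)
Definition nstar (T : Type) (R : realType) (p : nat)
  (X : nat -> T -> p.-tuple R) (tn : T -> p.-tuple R) (n : nat) (w : T) : nat :=
  \sum_(i < n) (X i w != tn w).

From HB Require Import structures.
From mathcomp Require Import all_boot all_order all_algebra.
From mathcomp Require Import all_classical all_reals all_analysis.
From mathcomp Require Import measurable_realfun ring.
Import Order.TTheory GRing.Theory Num.Def Num.Theory.
Import numFieldNormedType.Exports.
Set Implicit Arguments. Unset Strict Implicit. Unset Printing Implicit Defensive.
Local Open Scope classical_set_scope.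
Local Open Scope ring_scope.

(* Put u = n^(1/10). If (n - n* ) / sqrt n > eps, then either |t_n - t| > u^-4,
   which by Markov's inequality has probability at most u^16 E|t_n - t|^4 =
   O(u^-4), or at least eps u^5 of the X_i coincide with t_n and thus satisfy
   |X_i - t|^(-3/2) >= u^6.  The expected number of indices i < n with the
   latter property is at most n E|X - t|^(-3/2) / u^6 = O(u^4), so a second
   Markov inequality bounds the probability of this event by O(1 / (eps u)). *)

Lemma measurable_fun_eucl_dist d (T : measurableType d) (R : realType) (p : nat)
    (f g : T -> p.-tuple R) :
  measurable_fun setT f -> measurable_fun setT g ->
  measurable_fun setT (fun w => eucl_dist (f w) (g w)).
Proof.
move=> mf mg; apply: measurableT_comp.
  exact: continuous_measurable_fun (@sqrt_continuous R).
apply: measurable_sum => j; apply/measurable_funX/measurable_funB.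
- exact: (measurable_fun_tnthP f).1 mf j.
- exact: (measurable_fun_tnthP g).1 mg j.
Qed.

Lemma measurable_tuple_eq d (T : measurableType d) (R : realType) (p : nat)
    (f g : T -> p.-tuple R) :
  measurable_fun setT f -> measurable_fun setT g ->
  measurable [set w | f w = g w].
Proof.
move=> mf mg.
have -> : [set w | f w = g w] =
    \bigcap_(j in [set: 'I_p]) [set w | tnth (f w) j == tnth (g w) j].
  apply/seteqP; split => w /= => [fg j _|fg]; first by rewrite /= fg.
  by apply/eqP; rewrite eqEtuple; apply/forallP => j; exact: fg.
apply: fin_bigcap_measurable => [|j _]; first exact: finite_finset.
have := measurable_fun_eqr ((measurable_fun_tnthP f).1 mf j)
  ((measurable_fun_tnthP g).1 mg j) measurableT (_ : measurable [set true]).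
by rewrite setTI => /(_ I); congr measurable; apply/seteqP; split => w /=.
Qed.

Lemma measurable_fun_count_eq d (T : measurableType d) (R : realType) (p : nat)
    (x : nat -> T -> p.-tuple R) (y : T -> p.-tuple R) (n : nat) :
  (forall i, measurable_fun setT (x i)) -> measurable_fun setT y ->
  measurable_fun setT (fun w => (\sum_(i < n) (x i w == y w))%N%:R : R).
Proof.
move=> mx my; under eq_fun => w do rewrite natr_sum.
apply: measurable_sum => i.
have -> : (fun w => ((x i w == y w) : nat)%:R) = \1_[set w | x i w = y w] :> (T -> R).
  apply/funext => w; rewrite indicE.
  by case: eqP => [xy|xy]; [rewrite mem_set|rewrite memNset].
exact/measurable_indic/measurable_tuple_eq.
Qed.

Lemma measurable_fun_inv_pow32 (R : realType) : measurable_fun setT (@inv_pow32 R).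
Proof.
apply: measurable_fun_ifT; first exact: measurable_fun_eqr.
  exact: measurable_cst.
by apply: measurableT_comp => //; exact: measurable_powR.
Qed.

Lemma measurable_efun_ge d (T : measurableType d) (R : realType)
    (f : T -> \bar R) (a : \bar R) :
  measurable_fun setT f -> measurable [set x | (a <= f x)%E].
Proof. by move=> mf; rewrite -[X in measurable X]setTI; exact: emeasurable_fun_c_infty. Qed.

Lemma measurable_fun_gt d (T : measurableType d) (R : realType) (f : T -> R) (a : R) :
  measurable_fun setT f -> measurable [set x | a < f x].
Proof.
move=> mf; have := mf measurableT _ (measurable_itv `]a, +oo[).
by rewrite setTI; congr measurable; apply/seteqP; split => x /=; rewrite in_itv /= andbT.
Qed.

Lemma inv_pow32_ge0 (R : realType) (r : R) : (0 <= inv_pow32 r)%E.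
Proof. by rewrite /inv_pow32; case: ifP => // _; rewrite lee_fin powR_ge0. Qed.

Lemma inv_pow32_ge (R : realType) (r u : R) : 0 < u -> 0 <= r ->
  r <= (u ^+ 4)^-1 -> ((u ^+ 6)%:E <= inv_pow32 r)%E.
Proof.
move=> u0 r_ge0 ru; rewrite /inv_pow32; case: eqP => [_|/eqP r_neq0]; first exact: leey.
rewrite lee_fin.
have r0 : 0 < r by rewrite lt_neqAle eq_sym r_neq0.
have r32 : r `^ (3 / 2) = Num.sqrt (r ^+ 3).
  by rewrite powRrM powR_mulrn ?ltW // powR12_sqrt // exprn_ge0 // ltW.
have u6 : (u ^+ 6)^-1 = Num.sqrt (((u ^+ 4)^-1) ^+ 3).
  rewrite -[(u ^+ 6)^-1]ger0_norm ?invr_ge0 ?exprn_ge0 ?ltW // -sqrtr_sqr.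
  by rewrite -!exprVn -!exprM.
rewrite powRN r32 -[u ^+ 6]invrK lef_pV2 ?posrE ?invr_gt0 ?sqrtr_gt0 ?exprn_gt0 //.
rewrite u6 ler_sqrt; last by rewrite exprn_ge0 // invr_ge0 exprn_ge0 // ltW.
by apply: lerXn2r => //; rewrite nnegrE ?invr_ge0 ?exprn_ge0 // ltW.
Qed.

Lemma markov_ge0 d (T : measurableType d) (R : realType)
    (mu : {measure set T -> \bar R}) (f : T -> \bar R) (a : R) :
  measurable_fun setT f -> (forall x, 0 <= f x)%E -> 0 < a ->
  (mu [set x | a%:E <= f x] <= a^-1%:E * \int[mu]_x f x)%E.
Proof.
move=> mf f0 a0; rewrite lee_pdivlMl //.
have := le_integral_abse mu measurableT mf a0.
have -> : [set: T] `&` [set x | (a%:E <= `|f x|)%E] = [set x | (a%:E <= f x)%E].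
  by rewrite setTI; apply/seteqP; split => x /=; rewrite gee0_abs.
by under eq_integral => x _ do rewrite gee0_abs //.
Qed.

Lemma integral_sum_indic_preimage d (T : measurableType d) d' (V : measurableType d')
    (R : realType) (mu : {measure set T -> \bar R}) (n : nat) (x : nat -> T -> V)
    (A : set V) :
  (forall i, measurable_fun setT (x i)) -> measurable A ->
  (\int[mu]_w (\sum_(i < n) \1_(x i @^-1` A) w)%:E = \sum_(i < n) mu (x i @^-1` A))%E.
Proof.
move=> mx mA.
have mxA i : measurable (x i @^-1` A) by rewrite -[X in measurable X]setTI; exact: mx.
under eq_integral => w _ do rewrite -sumEFin.
rewrite ge0_integral_sum // => [|i].
- by apply: eq_bigr => i _; rewrite integral_indic // setIT.
- by apply/measurable_EFinP; exact: measurable_indic.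
Qed.

Lemma subn_sum_neq (V : eqType) (x : nat -> V) (y : V) (n : nat) :
  (n - \sum_(i < n) (x i != y) = \sum_(i < n) (x i == y))%N.
Proof.
have sum_n : (\sum_(i < n) (x i == y) + \sum_(i < n) (x i != y))%N = n.
  rewrite -big_split /= (eq_bigr (fun=> 1%N)) => [|i _]; last by case: (x i == y).
  by rewrite sum_nat_const card_ord muln1.
by rewrite -{1}sum_n addnK.
Qed.

Lemma sum_eq_le_sum_mem (V : eqType) (x : nat -> V) (y : V) (A : set V) (n : nat) :
  y \in A -> (\sum_(i < n) (x i == y) <= \sum_(i < n) (x i \in A))%N.
Proof. by move=> yA; apply: leq_sum => i _; case: eqP => // ->; rewrite yA. Qed.

Lemma rootn_expn (R : realType) (k : nat) (x : R) : (0 < k)%N -> 0 <= x ->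
  (x `^ k%:R^-1) ^+ k = x.
Proof.
move=> k_gt0 x_ge0.
by rewrite -powR_mulrn ?powR_ge0 // -powRrM mulVf ?powRr1 // pnatr_eq0 -lt0n.
Qed.

Lemma cvg_div_rootn (R : realType) (k : nat) (M : R) : (0 < k)%N ->
  (fun n : nat => M / n%:R `^ k%:R^-1) @ \oo --> (0 : R).
Proof.
move=> k_gt0; apply/cvgr0Pnorm_lt => e e_gt0.
set r := `|M| / e + 1.
have r_gt0 : 0 < r by rewrite ltr_pwDr // divr_ge0 // ltW.
near=> n.
set u := n%:R `^ k%:R^-1.
have u_ge0 : 0 <= u by exact: powR_ge0.
have r_le_u : r <= u.
  rewrite -(ler_pXn2r k_gt0) ?nnegrE ?(ltW r_gt0) // rootn_expn //.
  by near: n; exact: nbhs_infty_ger.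
have u_gt0 : 0 < u by exact: lt_le_trans r_le_u.
rewrite normrM normfV (ger0_norm u_ge0) ltr_pdivrMr //.
apply: lt_le_trans (_ : e * r <= e * u); last by rewrite ler_pM2l.
by rewrite /r mulrDr mulrCA mulfV ?gt_eqF // mulr1 ltrDl mulr1.
Unshelve. all: end_near.
Qed.

Lemma deviation_rate_le (R : realType) (C K eps u : R) :
  0 < eps -> 0 <= K -> 1 <= u ->
  C / u ^+ 4 + K / (eps * u) <= (`|C| + K / eps) / u.
Proof.
move=> eps_gt0 K_ge0 u_ge1; have u_gt0 : 0 < u by exact: lt_le_trans u_ge1.
have -> : K / (eps * u) = K / eps / u by field; rewrite !gt_eqF.
rewrite mulrDl lerD2r; apply: le_trans (_ : `|C| / u ^+ 4 <= _).
  by apply: ler_wpM2r; [rewrite invr_ge0 exprn_ge0 // ltW|exact: ler_norm].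
apply: ler_wpM2l => //; rewrite lef_pV2 ?posrE ?exprn_gt0 //.
exact: ler_eXnr.
Qed.

Section deviation_bound.
Context d (T : measurableType d) (R : realType) (P : probability T R) (p : nat).
Variables (F : probability (p.-tuple R) R) (X : nat -> T -> p.-tuple R).
Variables (t : p.-tuple R) (tn : T -> p.-tuple R).
Hypotheses (mX : forall i, measurable_fun setT (X i)) (mtn : measurable_fun setT tn).
Hypothesis hdist : forall i A, measurable A -> P (X i @^-1` A) = F A.
Variables (n : nat) (u : R).
Hypotheses (u_gt0 : 0 < u) (u10 : u ^+ 10 = n%:R).

Let near_t := [set x : p.-tuple R | ((u ^+ 6)%:E <= inv_pow32 (eucl_dist x t))%E].
Let hits w : R := \sum_(i < n) \1_(X i @^-1` near_t) w.
Let far := [set w | (((u ^+ 4)^-1 ^+ 4)%:E <= (eucl_dist (tn w) t ^+ 4)%:E)%E].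
Let many_hits eps := [set w | ((eps * u ^+ 5)%:E <= (hits w)%:E)%E].

Let measurable_inv_pow32_dist :
  measurable_fun setT (fun x => inv_pow32 (eucl_dist x t)).
Proof.
exact: measurableT_comp (@measurable_fun_inv_pow32 R)
  (measurable_fun_eucl_dist (@measurable_id _ _ setT) (measurable_cst t)).
Qed.

Let measurable_near_t : measurable near_t.
Proof. exact: measurable_efun_ge. Qed.

Let measurable_dist4 : measurable_fun setT (fun w => (eucl_dist (tn w) t ^+ 4)%:E).
Proof.
apply/measurable_EFinP/measurable_funX.
exact: measurable_fun_eucl_dist mtn (measurable_cst t).
Qed.

Let measurable_hits : measurable_fun setT (fun w => (hits w)%:E).
Proof.
apply/measurable_EFinP/measurable_sum => i.
by apply: measurable_indic; rewrite -[X in measurable X]setTI; exact: mX.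
Qed.

Lemma prob_far_le (C : R) :
  (\int[P]_w (eucl_dist (tn w) t ^+ 4)%:E <= (C / n%:R ^+ 2)%:E)%E ->
  (P far <= (C / u ^+ 4)%:E)%E.
Proof.
move=> hC; have a_gt0 : 0 < (u ^+ 4)^-1 ^+ 4 by rewrite !(exprn_gt0, invr_gt0).
apply: le_trans (markov_ge0 _ measurable_dist4 _ a_gt0) _.
  by move=> w; rewrite lee_fin exprn_ge0 // sqrtr_ge0.
apply: le_trans (lee_wpmul2l _ hC) _; first by rewrite lee_fin invr_ge0 ltW.
rewrite -EFinM lee_fin -u10 le_eqVlt; apply/orP; left; apply/eqP.
by field; rewrite gt_eqF.
Qed.

Lemma prob_many_hits_le (K eps : R) : 0 < eps ->
  (\int[F]_x inv_pow32 (eucl_dist x t) = K%:E)%E ->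
  (P (many_hits eps) <= (K / (eps * u))%:E)%E.
Proof.
move=> eps_gt0 hK.
have F_near : (F near_t <= (u ^+ 6)^-1%:E * K%:E)%E.
  rewrite -hK; apply: markov_ge0 => // [x|]; [exact: inv_pow32_ge0|exact: exprn_gt0].
have a_gt0 : 0 < eps * u ^+ 5 by rewrite mulr_gt0 // exprn_gt0.
apply: le_trans (markov_ge0 _ measurable_hits _ a_gt0) _.
  by move=> w; rewrite lee_fin sumr_ge0 // => i _; rewrite indicE.
rewrite integral_sum_indic_preimage //.
rewrite (eq_bigr (fun=> F near_t)) => [|i _]; last exact: hdist.
rewrite -(fineK (fin_num_measure F _ measurable_near_t)) -EFinM lee_fin in F_near.
rewrite -(fineK (fin_num_measure F _ measurable_near_t)) sumEFin sumr_const.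
rewrite card_ord -EFinM lee_fin -mulr_natl -u10.
apply: le_trans (ler_wpM2l _ (ler_wpM2l _ F_near)) _.
- by rewrite invr_ge0 ltW.
- by rewrite exprn_ge0 // ltW.
by rewrite le_eqVlt; apply/orP; left; apply/eqP; field; rewrite !gt_eqF.
Qed.

Lemma deviation_subset (eps : R) : 0 < eps ->
  [set w | eps < `| (n - nstar X tn n w)%N%:R / Num.sqrt n%:R |] `<=`
  far `|` many_hits eps.
Proof.
move=> eps_gt0 w /= dev; rewrite /far /many_hits /= !lee_fin.
set D := eucl_dist (tn w) t.
have D_ge0 : 0 <= D by exact: sqrtr_ge0.
have [|D4_lt] := leP ((u ^+ 4)^-1 ^+ 4) (D ^+ 4); first by left.
right.
have D_le : D <= (u ^+ 4)^-1.
  by move: (ltW D4_lt); rewrite ler_pXn2r // nnegrE invr_ge0 exprn_ge0 // ltW.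
have sqrt_n : Num.sqrt n%:R = u ^+ 5.
  by rewrite -u10 (_ : 10 = 5 * 2)%N // exprM sqrtr_sqr ger0_norm // exprn_ge0 // ltW.
have count_le : ((n - nstar X tn n w)%N%:R : R) <= hits w.
  rewrite /nstar (subn_sum_neq (fun i => X i w)) /hits.
  rewrite [X in _ <= X](eq_bigr (fun i : 'I_n => (X i w \in near_t)%:R)) => [|i _].
    rewrite -natr_sum ler_nat; apply: (sum_eq_le_sum_mem (fun i => X i w)).
    by rewrite mem_set //=; apply: inv_pow32_ge.
  by rewrite indicE.
rewrite sqrt_n ger0_norm ?divr_ge0 ?exprn_ge0 ?(ltW u_gt0) // in dev.
rewrite ltr_pdivlMr ?exprn_gt0 // in dev.
exact: ltW (lt_le_trans dev count_le).
Qed.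

Lemma prob_deviation_le (C K eps : R) : 0 < eps ->
  (\int[P]_w (eucl_dist (tn w) t ^+ 4)%:E <= (C / n%:R ^+ 2)%:E)%E ->
  (\int[F]_x inv_pow32 (eucl_dist x t) = K%:E)%E ->
  (P [set w | (eps < `| (n - nstar X tn n w)%N%:R / Num.sqrt n%:R |)%R] <=
    (C / u ^+ 4 + K / (eps * u))%:E)%E.
Proof.
move=> eps_gt0 hC hK.
have m_dev : measurable [set w | eps < `| (n - nstar X tn n w)%N%:R / Num.sqrt n%:R |].
  apply/measurable_fun_gt/measurableT_comp => //.
  apply: measurable_funM (measurable_cst _).
  rewrite /nstar; under eq_fun => w do rewrite (subn_sum_neq (fun i => X i w)).
  exact: measurable_fun_count_eq.
have m_far : measurable far := measurable_efun_ge _ measurable_dist4.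
have m_many : measurable (many_hits eps) := measurable_efun_ge _ measurable_hits.
have m_union : measurable (far `|` many_hits eps) by exact: measurableU.
apply: le_trans (le_measure P (mem_set m_dev) (mem_set m_union)
  (deviation_subset eps_gt0)) _.
apply: le_trans (measureU2 P m_far m_many) _.
by rewrite EFinD; exact: leeD (prob_far_le hC) (prob_many_hits_le eps_gt0 hK).
Qed.

End deviation_bound.

Unset Implicit Arguments.
Theorem lemma1 (d : measure_display) (T : measurableType d) (R : realType)
  (P : probability T R) (p : nat) (hp : (2 <= p)%N)
  (F : probability (p.-tuple R) R)
  (X : nat -> {RV P >-> p.-tuple R})
  (t : p.-tuple R) (tn : nat -> {RV P >-> p.-tuple R})
  (hind : mutually_independent P (fun i => (X i : T -> p.-tuple R)))
  (hdist : forall i (A : set (p.-tuple R)), measurable A ->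
     P (X i @^-1` A) = F A)
  (hmom : exists C : R, \forall n \near \oo,
     (\int[P]_w ((eucl_dist (tn n w) t) ^+ 4)%:E <= (C / (n%:R ^+ 2))%:E)%E)
  (hneg : (\int[F]_x inv_pow32 (eucl_dist x t) < +oo)%E) :
  forall eps : R, 0 < eps ->
    (fun n : nat => P [set w | eps <
        `| ((n - nstar (fun i => (X i : T -> p.-tuple R)) (tn n) n w)%N%:R
            / Num.sqrt n%:R) : R |]) @ \oo --> 0%E.
Proof.
move=> eps eps_gt0; have [C hC] := hmom.
have I_ge0 : (0 <= \int[F]_x inv_pow32 (eucl_dist x t))%E.
  by apply: integral_ge0 => x _; exact: inv_pow32_ge0.
set K := fine (\int[F]_x inv_pow32 (eucl_dist x t))%E.
have hK : (\int[F]_x inv_pow32 (eucl_dist x t) = K%:E)%E by rewrite fineK ?ge0_fin_numE.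
have K_ge0 : 0 <= K by rewrite fine_ge0.
apply: (@squeeze_cvge _ _ _ _ (cst 0%E) _
  (fun n => ((`|C| + K / eps) / n%:R `^ 10^-1)%:E)).
- near=> n; apply/andP; split; first exact: measure_ge0.
  set u := n%:R `^ 10^-1.
  have u10 : u ^+ 10 = n%:R by exact: rootn_expn.
  have u_ge1 : 1 <= u.
    rewrite -(ler_pXn2r (_ : 0 < 10)%N) ?nnegrE ?powR_ge0 // u10 expr1n ler1n.
    by near: n; exact: nbhs_infty_gt.
  have hCn : (\int[P]_w (eucl_dist (tn n w) t ^+ 4)%:E <= (C / n%:R ^+ 2)%:E)%E.
    by near: n; exact: hC.
  apply: le_trans (prob_deviation_le (X := fun i => (X i : T -> _))
    (fun i => measurable_funPT (X i)) (measurable_funPT (tn n)) hdist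
    (lt_le_trans ltr01 u_ge1) u10 eps_gt0 hCn hK) _.
  by rewrite lee_fin deviation_rate_le.
- by apply: cvg_near_cst; exact: nearW.
- by apply: cvg_EFin; [exact: nearW|exact: cvg_div_rootn].
Unshelve. all: end_near.
Qed.
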